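(* Let $H_0$ be the solution of $H_0'' = -Q(t)^2H_0$ for $t > 0$ with $H_0(0) = 0$, $H_0'(0) = -1$, and let $\tau_0 > 0$ be its first positive zero. Let $p$ solve $$p''(t) = -Q(t+\tau_0)^2\,p(t), \quad t > 0, \qquad p(0) = 0,\ p'(0) = 1.$$ Then $p(t) > 0$ for all $0 < t < \infty$. Furthermore, there is a constant $c_1 > 0$ with $\min_{t \ge 1} p(t) \ge c_1$.
   Context: $Q(t)$, $t\ge 0$, denotes the radial profile of the positive radial ground state of $\Delta\phi - \phi + |\phi|^2\phi = 0$ on $\mathbb{R}^3$; it solves $-Q'' - \frac{2}{t}Q' + Q - Q^3 = 0$. The first positive zero $\tau_0$ of $H_0$ exists; this is the case $\epsilon = 0$ of the paper's sign-change lemma for $H_\epsilon$. *)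

From Stdlib Require Import Reals.
From Coquelicot Require Import Coquelicot.
Open Scope R_scope.

(* Q is the radial profile of the positive radial ground state of
   Delta phi - phi + phi^3 = 0 on R^3.  We represent the profile by its even
   extension to all of R (a smooth radial function on R^3 has an even smooth
   profile; evenness encodes Q'(0) = 0).  Q is twice differentiable, positive,
   tends to 0 at infinity, and solves -Q'' - (2/t) Q' + Q - Q^3 = 0 for t > 0.
   By Kwong's uniqueness theorem these conditions determine Q uniquely. *)
Definition is_ground_state_profile (Q : R -> R) : Prop :=
  exists Q1 Q2 : R -> R,
    (forall t, is_derive Q t (Q1 t)) /\
    (forall t, is_derive Q1 t (Q2 t)) /\
    (forall t, Q (- t) = Q t) /\
    (forall t, 0 < Q t) /\
    is_lim Q p_infty 0 /\
    (forall t, 0 < t -> - Q2 t - (2 / t) * Q1 t + Q t - (Q t) ^ 3 = 0).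

Definition solves_ode (V f : R -> R) (a b : R) : Prop :=
  exists f1 : R -> R,
    (forall t, is_derive f t (f1 t)) /\
    (forall t, is_derive f1 t (- V t * f t)) /\
    f 0 = a /\ f1 0 = b.

From Stdlib Require Import Reals Psatz.
From Coquelicot Require Import Coquelicot.
Open Scope R_scope.

(* Q is strictly decreasing on [0, oo): the energy Q'^2/2 + Q^4/4 - Q^2/2 is
   nonincreasing there and nonnegative because Q tends to 0.  With mu = Q(tau0),
   the function g(t) = t (1 - mu Q(t)) satisfies g'' + Q^2 g = t Q (Q - mu),
   which is positive on (0, tau0) and nonpositive beyond.  The Wronskian of H0
   and g over [0, tau0] forces mu^2 < 1, so g(. + tau0) is a positive
   supersolution of the equation of p on [0, oo), and Picone's identity then
   rules out a positive zero of p.  Being positive and concave, p is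
   nondecreasing, hence p >= p(1) on [1, oo). *)

(* Stated for an eta-expanded function on R so that it rewrites the [Derive]
   terms produced by [auto_derive]. *)
Lemma Derive_of_is_derive (f : R -> R) (x l : R) :
  is_derive f x l -> Derive (fun y : R => f y) x = l.
Proof. apply is_derive_unique. Qed.

Ltac ex_derive_from_hyps :=
  match goal with |- ex_derive (fun x => ?f x) ?t =>
    match goal with H : forall u, is_derive f u _ |- _ => exact (ex_intro _ _ (H t)) end
  end.

Ltac rewrite_Derive_from_hyps :=
  repeat match goal with |- context [Derive (fun x => ?f x) ?t] =>
    match goal with H : forall u, is_derive f u _ |- _ =>
      rewrite (Derive_of_is_derive f t _ (H t)) end
  end.

Ltac derive_from_hyps :=
  auto_derive; [repeat split; try ex_derive_from_hyps | rewrite_Derive_from_hyps].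

Lemma Rmin_half_between (a b : R) :
  0 < a -> 0 < b -> 0 < Rmin a b / 2 /\ Rmin a b / 2 < a /\ Rmin a b / 2 < b.
Proof. intros Ha Hb. unfold Rmin; destruct (Rle_dec a b); lra. Qed.

Lemma is_derive_sign_near (f : R -> R) (x d : R) :
  is_derive f x d -> d <> 0 ->
  exists e, 0 < e /\
    forall t, t <> x -> Rabs (t - x) < e -> 0 < (f t - f x) * (t - x) * d.
Proof.
  intros Hd Hd0. apply is_derive_Reals in Hd.
  destruct (Hd (Rabs d) (Rabs_pos_lt _ Hd0)) as [e He].
  exists e. split; [apply cond_pos|]. intros t Ht Hte.
  assert (Hh : t - x <> 0) by lra.
  specialize (He (t - x) Hh Hte). replace (x + (t - x)) with t in He by ring.
  set (q := (f t - f x) / (t - x)) in He.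
  assert (Eq : f t - f x = q * (t - x)) by (unfold q; field; exact Hh).
  assert (Hqd : 0 < q * d).
  { destruct (Rcase_abs d) as [Hneg|Hnn].
    - rewrite (Rabs_left d Hneg) in He. apply Rabs_def2 in He. nra.
    - rewrite (Rabs_right d Hnn) in He. apply Rabs_def2 in He. nra. }
  assert (Hsq : 0 < (t - x) * (t - x)) by (apply Rsqr_pos_lt in Hh; exact Hh).
  rewrite Eq. nra.
Qed.

Lemma is_derive_pos_right (f : R -> R) (x d : R) :
  is_derive f x d -> 0 < d -> exists e, 0 < e /\ forall t, x < t < x + e -> f x < f t.
Proof.
  intros Hd Hpos. destruct (is_derive_sign_near f x d Hd) as [e [He Hsign]]; [lra|].
  exists e; split; [exact He|]. intros t Ht.
  specialize (Hsign t ltac:(lra) ltac:(rewrite Rabs_right; lra)).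
  assert (0 < (t - x) * d) by nra. nra.
Qed.

Lemma local_min_right_derive_nonneg (f : R -> R) (x d e : R) :
  0 < e -> is_derive f x d -> (forall t, x < t < x + e -> f x <= f t) -> 0 <= d.
Proof.
  intros He Hd Hmin. destruct (Rle_lt_dec 0 d) as [|Hneg]; [assumption|exfalso].
  destruct (is_derive_sign_near f x d Hd) as [e' [He' Hsign]]; [lra|].
  destruct (Rmin_half_between e e' He He') as (H0 & H1 & H2).
  set (t := x + Rmin e e' / 2).
  specialize (Hsign t ltac:(unfold t; lra) ltac:(rewrite Rabs_right; unfold t; lra)).
  specialize (Hmin t ltac:(unfold t; lra)).
  assert (0 < (t - x) * - d) by (unfold t; nra). nra.
Qed.

Lemma local_min_left_derive_nonpos (f : R -> R) (x d e : R) :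
  0 < e -> is_derive f x d -> (forall t, x - e < t < x -> f x <= f t) -> d <= 0.
Proof.
  intros He Hd Hmin. destruct (Rle_lt_dec d 0) as [|Hpos]; [assumption|exfalso].
  destruct (is_derive_sign_near f x d Hd) as [e' [He' Hsign]]; [lra|].
  destruct (Rmin_half_between e e' He He') as (H0 & H1 & H2).
  set (t := x - Rmin e e' / 2).
  specialize (Hsign t ltac:(unfold t; lra) ltac:(rewrite Rabs_left; unfold t; lra)).
  specialize (Hmin t ltac:(unfold t; lra)).
  assert (0 < (x - t) * d) by (unfold t; nra). nra.
Qed.

Lemma nondecreasing_of_derive_nonneg (f f' : R -> R) (a b : R) :
  a <= b -> (forall c, a <= c <= b -> is_derive f c (f' c)) ->
  (forall c, a < c < b -> 0 <= f' c) -> f a <= f b.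
Proof.
  intros Hab Hd Hnn. destruct (Req_dec a b) as [<-|Hne]; [lra|].
  destruct (MVT_cor2 f f' a b) as [c [Hc Hcab]];
    [lra | intros c Hc; apply is_derive_Reals, Hd, Hc |].
  specialize (Hnn c Hcab). nra.
Qed.

Lemma increasing_of_derive_pos (f f' : R -> R) (a b : R) :
  a < b -> (forall c, a <= c <= b -> is_derive f c (f' c)) ->
  (forall c, a < c < b -> 0 < f' c) -> f a < f b.
Proof.
  intros Hab Hd Hpos.
  destruct (MVT_cor2 f f' a b) as [c [Hc Hcab]];
    [lra | intros c Hc; apply is_derive_Reals, Hd, Hc |].
  specialize (Hpos c Hcab). nra.
Qed.

Lemma pos_before_first_zero (f f' : R -> R) (a b : R) :
  (forall t, is_derive f t (f' t)) -> f a = 0 -> 0 < f' a ->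
  (forall t, a < t < b -> f t <> 0) -> forall t, a < t < b -> 0 < f t.
Proof.
  intros Hd Ha Hd0 Hnz t Ht.
  destruct (is_derive_pos_right f a (f' a) (Hd a) Hd0) as [e [He Hinc]].
  destruct (Rmin_half_between e (t - a)) as (H0 & H1 & H2); [lra | lra |].
  set (s := a + Rmin e (t - a) / 2).
  assert (Hs : 0 < f s) by (rewrite <- Ha; apply Hinc; unfold s; lra).
  destruct (Rlt_le_dec 0 (f t)) as [|Hle]; [assumption|exfalso].
  assert (Hcont : continuity f).
  { intro y. apply derivable_continuous_pt. exists (f' y). apply is_derive_Reals, Hd. }
  destruct (IVT_cor f s t Hcont) as [z [Hz Hfz]]; [unfold s; lra | nra |].
  apply (Hnz z); [unfold s in Hz; lra | exact Hfz].
Qed.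

Lemma below_tangent (f f1 : R -> R) (a b : R) :
  a <= b -> (forall t, is_derive f t (f1 t)) ->
  (forall t, a <= t <= b -> f1 t <= f1 a) -> f b <= f a + f1 a * (b - a).
Proof.
  intros Hab Hd Hdec.
  enough (f a + f1 a * (a - a) - f a <= f a + f1 a * (b - a) - f b) by lra.
  apply (nondecreasing_of_derive_nonneg
           (fun t => f a + f1 a * (t - a) - f t) (fun t => f1 a - f1 t)); [lra | |].
  - intros c _. derive_from_hyps. ring.
  - intros c Hc. specialize (Hdec c ltac:(lra)). lra.
Qed.

Lemma is_derive_shift (f : R -> R) (a x df : R) :
  is_derive f (x + a) df -> is_derive (fun t => f (t + a)) x df.
Proof.
  intros Hd. auto_derive.
  - exists df; exact Hd.
  - rewrite (Derive_of_is_derive f _ _ Hd). ring.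
Qed.

Section Wronskian.

Variables V f f1 g g1 g2 : R -> R.
Hypothesis Hf : forall t, is_derive f t (f1 t).
Hypothesis Hf1 : forall t, is_derive f1 t (- V t * f t).
Hypothesis Hg : forall t, is_derive g t (g1 t).
Hypothesis Hg1 : forall t, is_derive g1 t (g2 t).

Definition wronskian (t : R) : R := f1 t * g t - f t * g1 t.

Lemma wronskian_derive t : is_derive wronskian t (- f t * (g2 t + V t * g t)).
Proof. unfold wronskian. derive_from_hyps. ring. Qed.

Lemma pos_of_pos_supersolution :
  f 0 = 0 -> f1 0 = 1 ->
  (forall t, 0 <= t -> 0 < g t) -> (forall t, 0 <= t -> g2 t + V t * g t <= 0) ->
  forall t, 0 < t -> 0 < f t.
Proof.
  intros f_0 f1_0 g_pos g_super.
  (* Picone's identity: Phi = W f / g is nondecreasing with Phi'(0) = 1. *)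
  pose proof wronskian_derive as HW.
  set (Phi := fun t => wronskian t * (f t / g t)).
  set (dPhi := fun t => - (g2 t + V t * g t) * f t ^ 2 / g t + (wronskian t / g t) ^ 2).
  assert (HPhi : forall t, 0 <= t -> is_derive Phi t (dPhi t)).
  { intros t Ht. specialize (g_pos t Ht). unfold Phi, dPhi.
    derive_from_hyps; [lra | unfold wronskian; field; lra]. }
  assert (dPhi_nonneg : forall t, 0 <= t -> 0 <= dPhi t).
  { intros t Ht. specialize (g_pos t Ht). specialize (g_super t Ht). unfold dPhi.
    assert (0 <= - (g2 t + V t * g t) * f t ^ 2 / g t).
    { apply Rmult_le_pos; [nra | left; apply Rinv_0_lt_compat, g_pos]. }
    nra. }
  assert (Phi_0 : Phi 0 = 0) by (unfold Phi; rewrite f_0; unfold Rdiv; ring).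
  assert (dPhi_0 : dPhi 0 = 1).
  { specialize (g_pos 0 (Rle_refl 0)). unfold dPhi, wronskian.
    rewrite f_0, f1_0. field. lra. }
  assert (Phi_pos : forall t, 0 < t -> 0 < Phi t).
  { destruct (is_derive_pos_right Phi 0 (dPhi 0)) as [e [He Hinc]];
      [apply HPhi; lra | lra |].
    intros t Ht. rewrite Phi_0 in Hinc.
    destruct (Rmin_half_between e t He Ht) as (H0 & H1 & H2).
    apply (Rlt_le_trans _ (Phi (Rmin e t / 2))); [apply Hinc; lra|].
    apply (nondecreasing_of_derive_nonneg Phi dPhi); [lra | |].
    - intros c Hc. apply HPhi. lra.
    - intros c Hc. apply dPhi_nonneg. lra. }
  intros t Ht.
  apply (pos_before_first_zero f f1 0 (t + 1)); [exact Hf | exact f_0 | lra | | lra].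
  intros s Hs Hzero. specialize (Phi_pos s ltac:(lra)).
  unfold Phi in Phi_pos. rewrite Hzero in Phi_pos. unfold Rdiv in Phi_pos. lra.
Qed.

Lemma derive_nonneg_of_nonneg_concave :
  (forall t, 0 <= t -> 0 <= V t) -> (forall t, 0 <= t -> 0 <= f t) ->
  forall t, 0 <= t -> 0 <= f1 t.
Proof.
  intros V_nonneg f_nonneg a Ha.
  destruct (Rle_lt_dec 0 (f1 a)) as [|Hneg]; [assumption|exfalso].
  pose proof (f_nonneg a Ha) as fa_nonneg.
  set (T := a + f a / - f1 a + 1).
  assert (HT : a <= T).
  { unfold T. assert (0 <= f a / - f1 a) by (apply Rdiv_le_0_compat; lra). lra. }
  assert (Htangent : f T <= f a + f1 a * (T - a)).
  { apply below_tangent; [exact HT | exact Hf |]. intros t Ht.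
    enough (- f1 a <= - f1 t) by lra.
    apply (nondecreasing_of_derive_nonneg (fun u => - f1 u) (fun u => V u * f u));
      [lra | intros c _; derive_from_hyps; ring |].
    intros c Hc. apply Rmult_le_pos; [apply V_nonneg | apply f_nonneg]; lra. }
  assert (f a + f1 a * (T - a) = f1 a) by (unfold T; field; lra).
  pose proof (f_nonneg T ltac:(lra)). lra.
Qed.

End Wronskian.

Definition potential (q : R) : R := q ^ 4 / 4 - q ^ 2 / 2.

Lemma potential_nonneg_sq_ge_2 q : 0 < q -> 0 <= potential q -> 2 <= q ^ 2.
Proof.
  unfold potential. intros Hq Hpot.
  replace (q ^ 4) with (q ^ 2 * q ^ 2) in Hpot by ring.
  assert (0 < q ^ 2) by (apply pow_lt; exact Hq). nra.
Qed.

Lemma potential_le q r : 1 <= q ^ 2 <= r ^ 2 -> potential q <= potential r.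
Proof.
  unfold potential. intros Hqr.
  replace (q ^ 4) with (q ^ 2 * q ^ 2) by ring.
  replace (r ^ 4) with (r ^ 2 * r ^ 2) by ring. nra.
Qed.

Section GroundState.

Variables Q Q1 Q2 : R -> R.
Hypothesis HQ : forall t, is_derive Q t (Q1 t).
Hypothesis HQ1 : forall t, is_derive Q1 t (Q2 t).
Hypothesis Q_even : forall t, Q (- t) = Q t.
Hypothesis Q_pos : forall t, 0 < Q t.
Hypothesis Q_lim : is_lim Q p_infty 0.
Hypothesis Q_ode : forall t, 0 < t -> - Q2 t - (2 / t) * Q1 t + Q t - (Q t) ^ 3 = 0.

Definition energy (t : R) : R := Q1 t ^ 2 / 2 + potential (Q t).

Lemma ground_state_derive_0 : Q1 0 = 0.
Proof.
  assert (Hodd : is_derive Q 0 (- Q1 0)).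
  { apply (is_derive_ext (fun t => Q (- t))); [exact Q_even|].
    derive_from_hyps. rewrite Ropp_0. ring. }
  pose proof (is_derive_unique _ _ _ Hodd). pose proof (is_derive_unique _ _ _ (HQ 0)).
  lra.
Qed.

Lemma energy_nonincreasing a b : 0 <= a <= b -> energy b <= energy a.
Proof.
  intros Hab. enough (- energy a <= - energy b) by lra.
  apply (nondecreasing_of_derive_nonneg (fun t => - energy t)
           (fun t => - Q1 t * (Q2 t - Q t + Q t ^ 3))); [lra | |].
  - intros c _. unfold energy, potential. derive_from_hyps. field.
  - intros c Hc. specialize (Q_ode c ltac:(lra)).
    replace (Q2 c - Q c + Q c ^ 3) with (- (2 / c) * Q1 c) by lra.
    assert (0 < / c) by (apply Rinv_0_lt_compat; lra).
    unfold Rdiv. nra.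
Qed.

Lemma energy_nonneg t : 0 <= t -> 0 <= energy t.
Proof.
  intros Ht. destruct (Rle_lt_dec 0 (energy t)) as [|Hneg]; [assumption|exfalso].
  set (eps := Rmin 1 (- energy t)).
  assert (Heps : 0 < eps) by (unfold eps, Rmin; destruct Rle_dec; lra).
  destruct (proj2 (is_lim_spec Q p_infty 0) Q_lim (mkposreal eps Heps)) as [M HM].
  set (u := Rmax t M + 1).
  specialize (HM u ltac:(unfold u; pose proof (Rmax_r t M); lra)). simpl in HM.
  rewrite Rminus_0_r, Rabs_right in HM by (left; apply Q_pos).
  pose proof (energy_nonincreasing t u ltac:(unfold u; pose proof (Rmax_l t M); lra)).
  assert (eps <= 1) by apply Rmin_l.
  assert (eps <= - energy t) by apply Rmin_r.
  assert (Hlow : - Q u / 2 < energy u).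
  { pose proof (Q_pos u). assert (Q u * Q u < Q u) by nra.
    pose proof (pow2_ge_0 (Q1 u)). pose proof (pow2_ge_0 (Q u ^ 2)).
    unfold energy, potential. replace (Q u ^ 4) with ((Q u ^ 2) ^ 2) by ring.
    simpl in *. lra. }
  lra.
Qed.

Lemma ground_state_derive_nonpos s : 0 < s -> Q1 s <= 0.
Proof.
  intros Hs. destruct (Rle_lt_dec (Q1 s) 0) as [|Hpos]; [assumption|exfalso].
  (* At a minimum point m of Q on [0, s] the energy is potential (Q m) >= 0, so
     Q m ^ 2 >= 2; the potential increases beyond that level, so the energy
     would grow from m to s. *)
  destruct (continuity_ab_min Q 0 s) as [m [Hmin Hm]]; [lra | |].
  { intros c _. apply derivable_continuous_pt. exists (Q1 c). apply is_derive_Reals, HQ. }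
  assert (Hms : m < s).
  { destruct (Req_dec m s) as [->|]; [exfalso|lra].
    assert (Q1 s <= 0) by
      (apply (local_min_left_derive_nonpos Q s _ s); [lra | apply HQ | intros; apply Hmin; lra]).
    lra. }
  assert (Hcrit : Q1 m = 0).
  { destruct (Req_dec m 0) as [->|Hm0]; [exact ground_state_derive_0|].
    apply Rle_antisym.
    - apply (local_min_left_derive_nonpos Q m _ m); [lra | apply HQ | intros; apply Hmin; lra].
    - apply (local_min_right_derive_nonneg Q m _ (s - m));
        [lra | apply HQ | intros; apply Hmin; lra]. }
  assert (Hpot_m : 0 <= potential (Q m)).
  { pose proof (energy_nonneg m ltac:(lra)) as Em. unfold energy in Em.
    rewrite Hcrit in Em. lra. }
  pose proof (potential_nonneg_sq_ge_2 (Q m) (Q_pos m) Hpot_m).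
  assert (Hle : potential (Q m) <= potential (Q s)).
  { apply potential_le. specialize (Hmin s ltac:(lra)). pose proof (Q_pos m). nra. }
  pose proof (energy_nonincreasing m s ltac:(lra)) as Ems. unfold energy in Ems.
  rewrite Hcrit in Ems. nra.
Qed.

Lemma ground_state_derive_neg s : 0 < s -> Q1 s < 0.
Proof.
  intros Hs. destruct (ground_state_derive_nonpos s Hs) as [|Hzero]; [assumption|exfalso].
  assert (Hsq : 2 <= Q s ^ 2).
  { apply potential_nonneg_sq_ge_2; [apply Q_pos|].
    pose proof (energy_nonneg s ltac:(lra)) as Es. unfold energy in Es.
    rewrite Hzero in Es. lra. }
  assert (HQ2 : Q2 s < 0).
  { pose proof (Q_ode s Hs) as Hode. rewrite Hzero in Hode. pose proof (Q_pos s). nra. }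
  assert (- Q2 s <= 0).
  { apply (local_min_left_derive_nonpos (fun t => - Q1 t) s _ s);
      [lra | exact (is_derive_opp _ _ _ (HQ1 s)) |].
    intros t Ht. pose proof (ground_state_derive_nonpos t ltac:(lra)). lra. }
  lra.
Qed.

Lemma ground_state_decreasing a b : 0 <= a < b -> Q b < Q a.
Proof.
  intros Hab. enough (- Q a < - Q b) by lra.
  apply (increasing_of_derive_pos (fun t => - Q t) (fun t => - Q1 t)); [lra | |].
  - intros c _. exact (is_derive_opp _ _ _ (HQ c)).
  - intros c Hc. pose proof (ground_state_derive_neg c ltac:(lra)). lra.
Qed.

Lemma ground_state_nonincreasing a b : 0 <= a <= b -> Q b <= Q a.
Proof.
  intros Hab. destruct (Req_dec a b) as [<-|Hne]; [lra|].
  left. apply ground_state_decreasing. lra.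
Qed.

(* Since (t Q)'' = t Q - t Q^3, the function g = t (1 - mu Q) satisfies
   g'' + Q^2 g = t Q (Q - mu), whose sign changes exactly where Q crosses mu. *)
Definition comparison (mu t : R) : R := t * (1 - mu * Q t).
Definition comparison1 (mu t : R) : R := 1 - mu * Q t - mu * t * Q1 t.
Definition comparison2 (mu t : R) : R := - mu * (2 * Q1 t + t * Q2 t).

Lemma comparison_derive mu t : is_derive (comparison mu) t (comparison1 mu t).
Proof. unfold comparison, comparison1. derive_from_hyps. ring. Qed.

Lemma comparison1_derive mu t : is_derive (comparison1 mu) t (comparison2 mu t).
Proof. unfold comparison1, comparison2. derive_from_hyps. ring. Qed.

Lemma comparison_defect mu t :
  0 < t -> comparison2 mu t + Q t ^ 2 * comparison mu t = t * Q t * (Q t - mu).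
Proof.
  intros Ht. unfold comparison, comparison2.
  replace (Q2 t) with (Q t - Q t ^ 3 - 2 / t * Q1 t) by (pose proof (Q_ode t Ht); lra).
  field. lra.
Qed.

Lemma ground_state_sq_lt_1_at_first_zero (H0 h1 : R -> R) (tau0 : R) :
  (forall t, is_derive H0 t (h1 t)) -> (forall t, is_derive h1 t (- Q t ^ 2 * H0 t)) ->
  H0 0 = 0 -> h1 0 = -1 -> 0 < tau0 -> H0 tau0 = 0 ->
  (forall t, 0 < t < tau0 -> H0 t <> 0) -> Q tau0 ^ 2 < 1.
Proof.
  intros HH0 Hh1 H0_0 h1_0 Htau H0_tau H0_nz.
  set (mu := Q tau0).
  assert (H0_neg : forall t, 0 < t < tau0 -> H0 t < 0).
  { intros t Ht. enough (0 < - H0 t) by lra.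
    apply (pos_before_first_zero (fun s => - H0 s) (fun s => - h1 s) 0 tau0);
      [intros s; exact (is_derive_opp _ _ _ (HH0 s)) | lra | lra | | exact Ht].
    intros s Hs Hzero. apply (H0_nz s Hs). lra. }
  assert (h1_tau : 0 <= h1 tau0).
  { enough (- h1 tau0 <= 0) by lra.
    apply (local_min_left_derive_nonpos (fun s => - H0 s) tau0 _ tau0);
      [lra | exact (is_derive_opp _ _ _ (HH0 tau0)) |].
    intros t Ht. pose proof (H0_neg t ltac:(lra)). lra. }
  (* W(0) = 0 and W(tau0) = H0'(tau0) tau0 (1 - mu^2). *)
  set (W := wronskian H0 h1 (comparison mu) (comparison1 mu)).
  assert (HW : W 0 < W tau0).
  { apply (increasing_of_derive_pos W
             (fun t => - H0 t * (comparison2 mu t + Q t ^ 2 * comparison mu t))); [lra | |].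
    - intros c _. apply (wronskian_derive (fun t => Q t ^ 2));
        [exact HH0 | exact Hh1 | apply comparison_derive | apply comparison1_derive].
    - intros c Hc. rewrite comparison_defect by lra.
      pose proof (H0_neg c Hc). pose proof (Q_pos c).
      pose proof (ground_state_decreasing c tau0 ltac:(lra)) as Hdec. fold mu in Hdec.
      assert (0 < c * Q c * (Q c - mu))
        by (apply Rmult_lt_0_compat; [apply Rmult_lt_0_compat|]; lra).
      nra. }
  unfold W, wronskian, comparison, comparison1 in HW.
  rewrite H0_0, H0_tau in HW. fold mu in HW.
  assert (Hprod : 0 < h1 tau0 * tau0 * (1 - mu * mu)) by nra.
  destruct (Rlt_le_dec 0 (1 - mu * mu)) as [|Hle]; [simpl; lra | exfalso].
  pose proof (Rmult_le_compat_l (h1 tau0 * tau0) _ _ ltac:(nra) Hle). lra.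
Qed.

Lemma shifted_comparison_pos tau0 t :
  0 < tau0 -> Q tau0 ^ 2 < 1 -> 0 <= t -> 0 < comparison (Q tau0) (t + tau0).
Proof.
  intros Htau Hlt Ht. unfold comparison.
  pose proof (ground_state_nonincreasing tau0 (t + tau0) ltac:(lra)).
  assert (Q tau0 * Q (t + tau0) <= Q tau0 * Q tau0)
    by (apply Rmult_le_compat_l; [left; apply Q_pos | lra]).
  simpl in Hlt. apply Rmult_lt_0_compat; lra.
Qed.

Lemma shifted_comparison_supersolution tau0 t :
  0 < tau0 -> 0 <= t ->
  comparison2 (Q tau0) (t + tau0) + Q (t + tau0) ^ 2 * comparison (Q tau0) (t + tau0) <= 0.
Proof.
  intros Htau Ht. rewrite comparison_defect by lra.
  pose proof (ground_state_nonincreasing tau0 (t + tau0) ltac:(lra)).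
  pose proof (Q_pos (t + tau0)).
  assert (0 <= (t + tau0) * Q (t + tau0) * (Q tau0 - Q (t + tau0)))
    by (apply Rmult_le_pos; [apply Rmult_le_pos|]; lra).
  lra.
Qed.

End GroundState.

Theorem theorem7p1 (Q H0 p : R -> R) (tau0 : R) :
  is_ground_state_profile Q ->
  solves_ode (fun t => Q t ^ 2) H0 0 (-1) ->
  0 < tau0 -> H0 tau0 = 0 -> (forall t, 0 < t < tau0 -> H0 t <> 0) ->
  solves_ode (fun t => Q (t + tau0) ^ 2) p 0 1 ->
  (forall t, 0 < t -> 0 < p t) /\
  (exists c1, 0 < c1 /\ forall t, 1 <= t -> c1 <= p t).
Proof.
  intros [Q1 [Q2 (HQ & HQ1 & Q_even & Q_pos & Q_lim & Q_ode)]]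
    [h1 (HH0 & Hh1 & H0_0 & h1_0)] Htau H0_tau H0_nz [p1 (Hp & Hp1 & p_0 & p1_0)].
  assert (Hmu : Q tau0 ^ 2 < 1)
    by (apply (ground_state_sq_lt_1_at_first_zero Q Q1 Q2 HQ HQ1 Q_even Q_pos Q_lim Q_ode
                 H0 h1); assumption).
  assert (p_pos : forall t, 0 < t -> 0 < p t).
  { apply (pos_of_pos_supersolution (fun t => Q (t + tau0) ^ 2) p p1
             (fun t => comparison Q (Q tau0) (t + tau0))
             (fun t => comparison1 Q Q1 (Q tau0) (t + tau0))
             (fun t => comparison2 Q1 Q2 (Q tau0) (t + tau0))); try assumption.
    - intros t. apply is_derive_shift, comparison_derive, HQ.
    - intros t. apply is_derive_shift, comparison1_derive; assumption.
    - intros t Ht. eapply shifted_comparison_pos; eauto.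
    - intros t Ht. eapply shifted_comparison_supersolution; eauto. }
  split; [exact p_pos|].
  exists (p 1). split; [apply p_pos; lra|].
  intros t Ht. apply (nondecreasing_of_derive_nonneg p p1); [lra | intros; apply Hp |].
  intros c Hc.
  apply (derive_nonneg_of_nonneg_concave (fun t => Q (t + tau0) ^ 2) p p1);
    [exact Hp | exact Hp1 | | | lra].
  - intros s _. apply pow2_ge_0.
  - intros s Hs. destruct (Req_dec s 0) as [->|]; [lra | left; apply p_pos; lra].
Qed.
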